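(* Let $X$ be a topological space and $I$ a $Z_B$-ideal of $B_1(X)$. The following are equivalent: (1) $I$ is a prime ideal of $B_1(X)$; (2) $I$ contains a prime ideal of $B_1(X)$; (3) for all $f,g\in B_1(X)$, if $fg=0$ then $f\in I$ or $g\in I$; (4) for every $f\in B_1(X)$ there exists $Z\in Z_B[I]$ such that $f$ does not change sign on $Z$ (i.e. $f\ge 0$ on $Z$ or $f\le0$ on $Z$).
   Context: For a topological space $X$, $B_1(X)$ denotes the commutative ring (with pointwise operations) of all Baire one functions $f:X\to\mathbb{R}$, i.e. pointwise limits of sequences of continuous real-valued functions on $X$. For $f\in B_1(X)$, $Z(f)=\{x\in X: f(x)=0\}$. For an ideal $I$, $Z_B[I]=\{Z(f):f\in I\}$. All ideals are proper. An ideal $I$ of $B_1(X)$ is a $Z_B$-ideal if for all $f\in B_1(X)$: $f\in I \iff Z(f)\in Z_B[I]$. *)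

From Stdlib Require Import Reals.
Open Scope R_scope.

Record TopSpace := {
  pt :> Type;
  is_open : (pt -> Prop) -> Prop;
  open_full : is_open (fun _ => True);
  open_inter : forall U V, is_open U -> is_open V ->
                 is_open (fun x => U x /\ V x);
  open_union : forall (J : Type) (U : J -> pt -> Prop),
                 (forall j, is_open (U j)) -> is_open (fun x => exists j, U j x)
}.

Definition R_open (U : R -> Prop) : Prop :=
  forall x, U x -> exists eps, 0 < eps /\ forall y, Rabs (y - x) < eps -> U y.

Definition continuous_on (X : TopSpace) (f : X -> R) : Prop :=
  forall U, R_open U -> is_open X (fun x => U (f x)).

Definition Baire1 (X : TopSpace) (f : X -> R) : Prop :=
  exists fn : nat -> X -> R,
    (forall n, continuous_on X (fn n)) /\
    forall x, Un_cv (fun n => fn n x) (f x).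

Definition Zset (X : TopSpace) (f : X -> R) : X -> Prop := fun x => f x = 0.

Definition B1_ideal (X : TopSpace) (I : (X -> R) -> Prop) : Prop :=
  (forall f, I f -> Baire1 X f) /\
  I (fun _ => 0) /\
  (forall f g, I f -> I g -> I (fun x => f x + g x)) /\
  (forall f g, I f -> Baire1 X g -> I (fun x => g x * f x)) /\
  ~ I (fun _ => 1).

Definition B1_prime (X : TopSpace) (P : (X -> R) -> Prop) : Prop :=
  B1_ideal X P /\
  forall f g, Baire1 X f -> Baire1 X g ->
    P (fun x => f x * g x) -> P f \/ P g.

Definition in_ZB (X : TopSpace) (I : (X -> R) -> Prop) (Z : X -> Prop) : Prop :=
  exists g, I g /\ forall x, Zset X g x <-> Z x.

Definition ZB_ideal (X : TopSpace) (I : (X -> R) -> Prop) : Prop :=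
  B1_ideal X I /\
  forall f, Baire1 X f -> (I f <-> in_ZB X I (Zset X f)).

From Stdlib Require Import Reals Lra Lia FunctionalExtensionality PropExtensionality.
Open Scope R_scope.

(* The cycle of implications is (1) -> (2) -> (3) -> (4) -> (1).  Steps
   (2) -> (3) and (3) -> (4) (via f^+ f^- = 0) hold for any I; the last step
   picks Z(k), k in I, on which |f| - |g| has a sign, say |g| <= |f|, and
   observes that Z(k^2 + (fg)^2) is contained in Z(g). *)

Definition lipschitz2 (h : R -> R -> R) : Prop :=
  forall a b a' b', Rabs (h a b - h a' b') <= Rabs (a - a') + Rabs (b - b').

Lemma open_ball_preimage (X : TopSpace) (f : X -> R) (a e : R) :
  continuous_on X f -> is_open X (fun x => Rabs (f x - a) < e).
Proof.
  intro Hf. apply (Hf (fun t => Rabs (t - a) < e)). intros t Ht.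
  exists (e - Rabs (t - a)). split; [lra|]. intros y Hy.
  pose proof (Rabs_triang (y - t) (t - a)) as Htri.
  replace (y - t + (t - a)) with (y - a) in Htri by ring. lra.
Qed.

(* Continuity is preserved by Lipschitz operations: the preimage of an open U
   is the union, over the squares of centre (a, b) mapped into U by h, of the
   intersections of the preimages of the two sides. *)
Lemma continuous_lipschitz2 (X : TopSpace) (f g : X -> R) (h : R -> R -> R) :
  lipschitz2 h -> continuous_on X f -> continuous_on X g ->
  continuous_on X (fun x => h (f x) (g x)).
Proof.
  intros Hh Hf Hg U HU.
  set (Square := {p : R * R * R | 0 < snd p /\ forall a' b',
         Rabs (a' - fst (fst p)) < snd p -> Rabs (b' - snd (fst p)) < snd p ->
         U (h a' b')}).
  set (in_square := fun (s : Square) (x : X) =>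
        Rabs (f x - fst (fst (proj1_sig s))) < snd (proj1_sig s) /\
        Rabs (g x - snd (fst (proj1_sig s))) < snd (proj1_sig s)).
  assert (Hunion : (fun x => U (h (f x) (g x))) =
                   (fun x => exists s : Square, in_square s x)).
  { apply functional_extensionality; intro x;
      apply propositional_extensionality; split.
    - intro Hx. destruct (HU _ Hx) as [eps [Heps Hball]].
      assert (Hsq : 0 < eps / 2 /\ forall a' b',
                Rabs (a' - f x) < eps / 2 -> Rabs (b' - g x) < eps / 2 ->
                U (h a' b')).
      { split; [lra|]. intros a' b' H1 H2. apply Hball.
        pose proof (Hh a' b' (f x) (g x)). lra. }
      exists (exist _ (f x, g x, eps / 2) Hsq : Square). unfold in_square; simpl.
      rewrite !Rminus_diag, Rabs_R0. lra.
    - intros [[[[a b] e] [He Hsq]] [H1 H2]]; simpl in *. apply Hsq; auto. }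
  rewrite Hunion. apply open_union. intro s.
  apply open_inter; apply open_ball_preimage; auto.
Qed.

Lemma Un_cv_lipschitz2 (u v : nat -> R) (l m : R) (h : R -> R -> R) :
  lipschitz2 h -> Un_cv u l -> Un_cv v m ->
  Un_cv (fun n => h (u n) (v n)) (h l m).
Proof.
  intros Hh Hu Hv eps Heps.
  destruct (Hu (eps / 2)) as [N1 H1]; [lra|].
  destruct (Hv (eps / 2)) as [N2 H2]; [lra|].
  exists (Nat.max N1 N2). intros n Hn. unfold R_dist in *.
  specialize (H1 n ltac:(lia)). specialize (H2 n ltac:(lia)).
  pose proof (Hh (u n) (v n) l m). lra.
Qed.

Lemma Baire1_lipschitz2 (X : TopSpace) (f g : X -> R) (h : R -> R -> R) :
  lipschitz2 h -> Baire1 X f -> Baire1 X g -> Baire1 X (fun x => h (f x) (g x)).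
Proof.
  intros Hh [fn [Hfn Hlimf]] [gn [Hgn Hlimg]].
  exists (fun n x => h (fn n x) (gn n x)). split.
  - intro n. apply continuous_lipschitz2; auto.
  - intro x. apply (Un_cv_lipschitz2 (fun n => fn n x) (fun n => gn n x)); auto.
Qed.

Lemma Baire1_lipschitz1 (X : TopSpace) (f : X -> R) (phi : R -> R) :
  (forall a a', Rabs (phi a - phi a') <= Rabs (a - a')) -> Baire1 X f ->
  Baire1 X (fun x => phi (f x)).
Proof.
  intros Hphi Hf. apply (Baire1_lipschitz2 X f f (fun a _ => phi a)); auto.
  intros a b a' b'. pose proof (Hphi a a'). pose proof (Rabs_pos (b - b')). lra.
Qed.

Lemma Baire1_pos_part (X : TopSpace) (f : X -> R) :
  Baire1 X f -> Baire1 X (fun x => Rmax (f x) 0).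
Proof.
  apply (Baire1_lipschitz1 X f (fun t => Rmax t 0)). intros a a'.
  unfold Rmax, Rabs. repeat (destruct (Rle_dec _ _) || destruct (Rcase_abs _)); lra.
Qed.

Lemma Baire1_neg_part (X : TopSpace) (f : X -> R) :
  Baire1 X f -> Baire1 X (fun x => Rmin (f x) 0).
Proof.
  apply (Baire1_lipschitz1 X f (fun t => Rmin t 0)). intros a a'.
  unfold Rmin, Rabs. repeat (destruct (Rle_dec _ _) || destruct (Rcase_abs _)); lra.
Qed.

Lemma Baire1_abs_diff (X : TopSpace) (f g : X -> R) :
  Baire1 X f -> Baire1 X g -> Baire1 X (fun x => Rabs (f x) - Rabs (g x)).
Proof.
  apply (Baire1_lipschitz2 X f g (fun a b => Rabs a - Rabs b)).
  intros a b a' b'. unfold Rabs. repeat destruct (Rcase_abs _); lra.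
Qed.

Section ZBIdeal.

Variable X : TopSpace.
Variable I : (X -> R) -> Prop.
Hypothesis HI : ZB_ideal X I.

(* In a Z_B-ideal, a Baire one g belongs to I as soon as its zero set contains
   the zero set of some member h of I, because then Z(g) = Z(gh) with gh in I. *)
Lemma ZB_ideal_zero_set_superset (g h : X -> R) :
  Baire1 X g -> I h -> (forall x, h x = 0 -> g x = 0) -> I g.
Proof.
  destruct HI as [[_ [_ [_ [Hmul _]]]] HZB]. intros Hg Hh Hsub.
  apply (proj2 (HZB g Hg)). exists (fun x => g x * h x). split.
  - apply Hmul; assumption.
  - intro x; unfold Zset; split; intro Hx.
    + destruct (Rmult_integral _ _ Hx); auto.
    + rewrite Hx; ring.
Qed.

(* If Z(p) is contained in Z(f) u Z(g) for some p in I (e.g. p = fg), and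
   |g| <= |f| on a zero set Z(k), k in I, then g lies in I: at a common zero of
   k and p either g vanishes, or f vanishes and so does g by domination.
   Hence Z(k^2 + p^2) is contained in Z(g). *)
Lemma ZB_ideal_dominated_factor (f g p : X -> R) (Z : X -> Prop) :
  I p -> (forall x, p x = 0 -> f x = 0 \/ g x = 0) -> in_ZB X I Z ->
  (forall x, Z x -> Rabs (g x) <= Rabs (f x)) -> Baire1 X g -> I g.
Proof.
  destruct HI as [[HB [_ [Hadd [Hmul _]]]] _].
  intros Hp Hpfg [k [Hk HkZ]] Hdom Hg.
  assert (Hsq : I (fun x => k x * k x + p x * p x))
    by (apply Hadd; apply Hmul; auto).
  apply (ZB_ideal_zero_set_superset g _ Hg Hsq). intros x Hx.
  assert (Hkx : k x = 0) by nra. assert (Hpx : p x = 0) by nra.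
  destruct (Hpfg x Hpx) as [Hfx | Hgx]; auto.
  pose proof (Hdom x (proj1 (HkZ x) Hkx)) as Hle.
  rewrite Hfx, Rabs_R0 in Hle.
  destruct (Req_dec (g x) 0) as [Hgx | Hgx]; [exact Hgx|].
  pose proof (Rabs_pos_lt (g x) Hgx). lra.
Qed.

(* (4) -> (1): choose Z in Z_B[I] on which |f| - |g| has a constant sign;
   the smaller of f, g in absolute value on Z lies in I. *)
Lemma ZB_ideal_sign_prime :
  (forall f, Baire1 X f -> exists Z, in_ZB X I Z /\
      ((forall x, Z x -> 0 <= f x) \/ (forall x, Z x -> f x <= 0))) ->
  B1_prime X I.
Proof.
  intro Hsign. split; [exact (proj1 HI)|]. intros f g Hf Hg Hfg.
  assert (Hzero : forall x, f x * g x = 0 -> f x = 0 \/ g x = 0)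
    by (intros x; apply Rmult_integral).
  destruct (Hsign _ (Baire1_abs_diff X f g Hf Hg)) as [Z [HZ [Hge | Hle]]].
  - right. apply (ZB_ideal_dominated_factor f g _ Z Hfg Hzero HZ); auto.
    intros x Zx. specialize (Hge x Zx). lra.
  - left. apply (ZB_ideal_dominated_factor g f _ Z Hfg); auto.
    + intros x Hx. destruct (Hzero x Hx); auto.
    + intros x Zx. specialize (Hle x Zx). lra.
Qed.

End ZBIdeal.

Lemma prime_below_annihilator (X : TopSpace) (I : (X -> R) -> Prop) :
  (exists P, B1_prime X P /\ (forall f, P f -> I f)) ->
  forall f g, Baire1 X f -> Baire1 X g ->
    (forall x, f x * g x = 0) -> I f \/ I g.
Proof.
  intros [P [[[_ [P0 _]] Hprime] HPI]] f g Hf Hg Hfg.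
  assert (Hprod : (fun x => f x * g x) = (fun _ => 0))
    by (apply functional_extensionality; exact Hfg).
  destruct (Hprime f g Hf Hg) as [HPf | HPg].
  - rewrite Hprod. exact P0.
  - left. apply HPI, HPf.
  - right. apply HPI, HPg.
Qed.

(* (3) -> (4), for any I: f^+ f^- = 0, so f^+ or f^- lies in I, and
   f <= 0 on Z(f^+), f >= 0 on Z(f^-). *)
Lemma annihilator_sign (X : TopSpace) (I : (X -> R) -> Prop) :
  (forall f g, Baire1 X f -> Baire1 X g ->
     (forall x, f x * g x = 0) -> I f \/ I g) ->
  forall f, Baire1 X f -> exists Z, in_ZB X I Z /\
    ((forall x, Z x -> 0 <= f x) \/ (forall x, Z x -> f x <= 0)).
Proof.
  intros Hann f Hf.
  destruct (Hann _ _ (Baire1_pos_part X f Hf) (Baire1_neg_part X f Hf))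
    as [Hpos | Hneg].
  - intro x. unfold Rmax, Rmin. destruct (Rle_dec _ _); ring.
  - exists (Zset X (fun x => Rmax (f x) 0)). split.
    + exists (fun x => Rmax (f x) 0). split; [exact Hpos | tauto].
    + right. intros x Zx. unfold Zset, Rmax in Zx. destruct (Rle_dec _ _); lra.
  - exists (Zset X (fun x => Rmin (f x) 0)). split.
    + exists (fun x => Rmin (f x) 0). split; [exact Hneg | tauto].
    + left. intros x Zx. unfold Zset, Rmin in Zx. destruct (Rle_dec _ _); lra.
Qed.

Theorem theorem2p16 (X : TopSpace) (I : (X -> R) -> Prop) :
  ZB_ideal X I ->
  let c1 := B1_prime X I in
  let c2 := exists P, B1_prime X P /\ (forall f, P f -> I f) in
  let c3 := forall f g, Baire1 X f -> Baire1 X g ->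
              (forall x, f x * g x = 0) -> I f \/ I g in
  let c4 := forall f, Baire1 X f ->
              exists Z, in_ZB X I Z /\
                ((forall x, Z x -> 0 <= f x) \/ (forall x, Z x -> f x <= 0)) in
  (c1 <-> c2) /\ (c2 <-> c3) /\ (c3 <-> c4).
Proof.
  intros HI c1 c2 c3 c4.
  assert (H12 : c1 -> c2) by (intro Hprime; exists I; auto).
  assert (H23 : c2 -> c3) by exact (prime_below_annihilator X I).
  assert (H34 : c3 -> c4) by exact (annihilator_sign X I).
  assert (H41 : c4 -> c1) by exact (ZB_ideal_sign_prime X I HI).
  split; [|split]; split; auto.
Qed.
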